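(* For positive integers $m,M$ let $$S_M(m)=\sum_{r=0}^M\left(-\frac14\right)^r\frac{(2m+2r-1)!}{r!\,(m+r-1)!}\binom{m-1+M}{m-1+r}.$$ Then $$S_M(1)=\frac{(2\cdot1-3)(2\cdot2-3)\cdots(2M-3)}{M!\,2^M},\qquad S_M(m)=\frac{(2m-1)!}{(m-1)!}S_M(1),$$ and in particular $S_M(m)\neq0$ for all positive integers $m,M$. *)

From mathcomp Require Import all_boot all_order all_algebra.
Set Implicit Arguments. Unset Strict Implicit. Unset Printing Implicit Defensive.
Import Order.TTheory GRing.Theory Num.Theory.
Local Open Scope ring_scope.

Definition S (M m : nat) : rat :=
  \sum_(0 <= r < M.+1)
    (- (1 / 4%:R)) ^+ r
    * (((2 * m + 2 * r - 1)`!)%:R / ((r`!)%:R * ((m + r - 1)`!)%:R))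
    * ('C(m - 1 + M, m - 1 + r))%:R.

Definition oddprod (M : nat) : rat :=
  \prod_(1 <= k < M.+1) ((2 * k)%:R - 3%:R).

From mathcomp Require Import all_boot all_order all_algebra.
From mathcomp Require Import ring zify.
Set Implicit Arguments. Unset Strict Implicit. Unset Printing Implicit Defensive.
Import Order.TTheory GRing.Theory Num.Theory.
Local Open Scope ring_scope.

(* With [binr x r] the generalized binomial coefficient x(x-1)...(x-r+1)/r!, the
   r-th term of S_M(k+1) is (2k+1)!/k! * binr (-k-3/2) r * C(k+M, M-r), so by
   Chu-Vandermonde S_M(k+1) = (2k+1)!/k! * binr (M-3/2) M.  The upper argument
   -k-3/2 + (k+M) no longer depends on k, and binr (M-3/2) M is the product of
   the odd numbers 2j-3 (j = 1..M) divided by 2^M M!, hence nonzero. *)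

Section GeneralizedBinomial.
Variable R : numFieldType.
Implicit Types (x y : R) (n r M : nat).

Definition ffactr x r : R := \prod_(i < r) (x - i%:R).

Definition binr x r : R := ffactr x r / (r`!)%:R.

Lemma ffactr0 x : ffactr x 0 = 1.
Proof. by rewrite /ffactr big_ord0. Qed.

Lemma ffactrSr x r : ffactr x r.+1 = ffactr x r * (x - r%:R).
Proof. by rewrite /ffactr big_ord_recr. Qed.

Lemma ffactrSl x r : ffactr (x + 1) r.+1 = (x + 1) * ffactr x r.
Proof.
rewrite /ffactr big_ord_recl subr0; congr (_ * _).
apply: eq_bigr => i _; rewrite /= -natr1; ring.
Qed.

Lemma fact_natr_neq0 n : ((n`!)%:R : R) != 0.
Proof. by rewrite pnatr_eq0 -lt0n fact_gt0. Qed.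

Lemma binr0 x : binr x 0 = 1.
Proof. by rewrite /binr ffactr0 fact0 divr1. Qed.

Lemma binr_pascal y r : binr (y + 1) r.+1 = binr y r.+1 + binr y r.
Proof.
rewrite /binr ffactrSl ffactrSr factS natrM -natr1.
by field; rewrite fact_natr_neq0 natr1 pnatr_eq0.
Qed.

Lemma binr_vandermonde x n M :
  \sum_(i < M.+1) binr x i * ('C(n, M - i))%:R = binr (x + n%:R) M.
Proof.
elim: n M => [|n IHn] M.
  rewrite addr0 big_ord_recr /= subnn bin0 mulr1 big1 ?add0r // => i _.
  by rewrite bin0n subn_eq0 leqNgt ltn_ord mulr0.
case: M => [|M]; first by rewrite big_ord1 !binr0 bin0 mul1r.
rewrite -natr1 addrA binr_pascal -IHn -IHn big_ord_recr /= subnn !bin0 mulr1.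
rewrite [in RHS]big_ord_recr /= subnn bin0 mulr1.
under eq_bigr => i _ do rewrite subSn ?leq_ord // binS natrD mulrDr.
under [X in _ = X + _ + _]eq_bigr => i _ do rewrite subSn ?leq_ord //.
by rewrite big_split /= addrAC.
Qed.

End GeneralizedBinomial.

Lemma odd_fact_ratioS p :
  ((2 * p).+3`!)%:R / (p.+1`!)%:R
  = ((2 * p).+1`!)%:R / (p`!)%:R * (2 * (2 * p).+3)%:R :> rat.
Proof.
rewrite !factS !natrM -!natr1 ?natrM.
by field; rewrite fact_natr_neq0 natr1 pnatr_eq0.
Qed.

Lemma odd_fact_ratio_ffactr k r :
  ((2 * (k + r)).+1`!)%:R / ((k + r)`!)%:R
  = (- 4%:R) ^+ r * ((2 * k).+1`!)%:R / (k`!)%:R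
    * ffactr (- (k%:R + 3%:R / 2%:R)) r :> rat.
Proof.
elim: r => [|r IHr]; first by rewrite addn0 ffactr0 expr0 mul1r mulr1.
rewrite addnS (_ : (2 * (k + r).+1).+1 = (2 * (k + r)).+3)%N; last lia.
rewrite odd_fact_ratioS IHr ffactrSr exprS.
rewrite (_ : 2 * (2 * (k + r)).+3 = 4 * k + 4 * r + 6)%N; last lia.
rewrite !natrD !natrM; field; exact: fact_natr_neq0.
Qed.

Lemma S_binr k M :
  S M k.+1 = ((2 * k).+1`!)%:R / (k`!)%:R * binr (M%:R - 3%:R / 2%:R) M.
Proof.
have -> : M%:R - 3%:R / 2%:R = - (k%:R + 3%:R / 2%:R) + (k + M)%:R :> rat.
  by rewrite natrD; ring.
rewrite -binr_vandermonde mulr_sumr /S big_mkord; apply: eq_bigr => i _.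
have le_iM : (i <= M)%N by rewrite -ltnS.
rewrite (_ : 2 * k.+1 + 2 * i - 1 = (2 * (k + i)).+1)%N; last lia.
rewrite (_ : k.+1 + i - 1 = k + i)%N; last lia.
rewrite subn1 /= -(subnDl k M i) bin_sub ?leq_add2l // [RHS]mulrA; congr (_ * _).
rewrite /binr invfM [_ * (_ * _^-1)]mulrCA odd_fact_ratio_ffactr.
rewrite (_ : - (1 / 4%:R) = (- 4%:R)^-1 :> rat) ?exprVn; last by rewrite div1r invrN.
by field; rewrite !fact_natr_neq0 expf_neq0.
Qed.

Lemma ffactr_oddprod M : ffactr (M%:R - 3%:R / 2%:R) M * 2%:R ^+ M = oddprod M.
Proof.
rewrite /oddprod big_rev_mkord subSS subn0.
transitivity (\prod_(i < M) ((M%:R - 3%:R / 2%:R - i%:R) * 2%:R) : rat).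
  by rewrite big_split prodr_const card_ord.
by apply: eq_bigr => i _; rewrite subSS natrM (natrB _ (ltnW (ltn_ord i))); field.
Qed.

Lemma oddprod_neq0 M : oddprod M != 0.
Proof.
rewrite /oddprod prodf_seq_neq0; apply/allP => k _ /=.
by rewrite subr_eq0 eqr_nat; apply: contraTneq isT => /(congr1 odd); rewrite oddM.
Qed.

Lemma S1_binr M : S M 1 = binr (M%:R - 3%:R / 2%:R) M.
Proof. by rewrite S_binr muln0 fact0 divr1 mul1r. Qed.

Lemma binr_oddprod M :
  binr (M%:R - 3%:R / 2%:R) M = oddprod M / ((M`!)%:R * 2%:R ^+ M).
Proof. by rewrite -ffactr_oddprod /binr; field; rewrite fact_natr_neq0 expf_neq0. Qed.

Theorem lemma5 (m M : nat) (hm : (0 < m)%N) (hM : (0 < M)%N) :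
  [/\ S M 1 = oddprod M / ((M`!)%:R * 2%:R ^+ M),
      S M m = ((2 * m - 1)`!)%:R / ((m - 1)`!)%:R * S M 1
    & S M m != 0].
Proof.
case: m hm => [//|k] _.
rewrite (_ : 2 * k.+1 - 1 = (2 * k).+1)%N; last lia.
rewrite subSS subn0 S1_binr S_binr binr_oddprod; split=> //.
by rewrite !(mulf_neq0, invr_neq0, fact_natr_neq0, oddprod_neq0, expf_neq0).
Qed.
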